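(* Let $n\ge1$ and let $\sigma\in(0,1)$, $c,d,\epsilon,l,s,y,y_->0$, $\tau\ge0$ be constants with $s\le l$. For $\alpha>0$ let $\eta=\max(|1-n\alpha l|,|1-n\alpha s|)$ and $$G_\alpha=\begin{bmatrix}\sigma&0&\alpha\\ \alpha cly_-&\eta&0\\ cd\epsilon ly_-(\tau+\alpha lyy_-)&\alpha d\epsilon l^2yy_-&\sigma+\alpha cd\epsilon ly_-\end{bmatrix}.$$ Let $\Delta=nscd\epsilon ly_-(1-\sigma+\tau)$ and $$\overline{\alpha}=\min\left\{\frac{\sqrt{\Delta^2+4ns(1-\sigma)^2cd\epsilon l^2yy_-^2(l+ns)}-\Delta}{2cd\epsilon l^2yy_-^2(l+ns)},\ \frac{1}{nl}\right\}.$$ Then the spectral radius satisfies $\rho(G_\alpha)<1$ for every $\alpha\in(0,\overline{\alpha})$.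
   Context: In the paper these constants arise as follows (not needed for the statement): $\sigma$ is the value of a matrix norm of $A-A_\infty$ for the column-stochastic weight matrix $A$ and its limit $A_\infty$; $c,d$ are norm-equivalence constants; $\tau=\|A-I\|_2$, $\epsilon=\|I-A_\infty\|_2$; $y,y_-$ are uniform bounds on $\|Y_k\|_2$, $\|Y_k^{-1}\|_2$; $l,s$ are the Lipschitz and strong-convexity constants of the local objectives. $\rho(\cdot)$ denotes spectral radius. *)

From HB Require Import structures.
From mathcomp Require Import all_boot all_order all_algebra.
From mathcomp Require Import complex.
From mathcomp Require Import all_classical all_reals.
Set Implicit Arguments. Unset Strict Implicit. Unset Printing Implicit Defensive.
Import Order.TTheory GRing.Theory Num.Theory.
Local Open Scope ring_scope.

Definition cmod (R : rcfType) (z : R[i]) : R :=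
  Num.sqrt (complex.Re z ^+ 2 + complex.Im z ^+ 2).

Definition cplx_mx (R : rcfType) (m : nat) (A : 'M[R]_m) : 'M[R[i]]_m :=
  map_mx (fun x => x%:C)%C A.

Definition spectral_radius (R : realType) (m : nat) (A : 'M[R]_m) : R :=
  reals.sup [set cmod lam | lam in [set lam : R[i] | eigenvalue (cplx_mx A) lam]]%classic.

Definition G_alpha (R : realType) (n : nat)
    (sigma c d eps l s y ym tau alpha : R) : 'M[R]_3 :=
  let eta := Num.max `|1 - n%:R * alpha * l| `|1 - n%:R * alpha * s| in
  \matrix_(i < 3, j < 3)
    nth 0 (nth [::] [:: [:: sigma; 0; alpha];
        [:: alpha * c * l * ym; eta; 0];
        [:: c * d * eps * l * ym * (tau + alpha * l * y * ym);
            alpha * d * eps * l ^+ 2 * y * ym;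
            sigma + alpha * c * d * eps * l * ym]] i) j.

Definition alpha_bar (R : realType) (n : nat)
    (sigma c d eps l s y ym tau : R) : R :=
  let Delta := n%:R * s * c * d * eps * l * ym * (1 - sigma + tau) in
  let K := c * d * eps * l ^+ 2 * y * ym ^+ 2 * (l + n%:R * s) in
  Num.min ((Num.sqrt (Delta ^+ 2 + 4 * n%:R * s * (1 - sigma) ^+ 2 * K) - Delta)
              / (2 * K))
          (1 / (n%:R * l)).

From HB Require Import structures.
From mathcomp Require Import all_boot all_order all_algebra.
From mathcomp Require Import complex.
From mathcomp Require Import all_classical all_reals.
From mathcomp Require Import ring lra.
Set Implicit Arguments.
Unset Strict Implicit.
Unset Printing Implicit Defensive.
Import Order.TTheory GRing.Theory Num.Theory.
Local Open Scope ring_scope.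

(* If a nonnegative matrix M admits a positive weight vector w with
   w^T M < w^T entrywise, then rho(M) < 1: for a left eigenvector u of
   eigenvalue lam, at the index k maximising |u_k| / w_k one gets
   |lam| |u_k| <= sum_i |u_i| M_ik <= (|u_k| / w_k) sum_i w_i M_ik.
   For G_alpha we take w = (w0, w1, 1).  Once n alpha l <= 1, so that
   eta = 1 - n alpha s, the three column inequalities are linear in w0 and w1,
   and they are simultaneously solvable exactly when
   c d eps l^2 y ym^2 (l + n s) alpha^2 + Delta alpha < n s (1 - sigma)^2,
   i.e. when alpha lies below the positive root that defines alpha_bar. *)

Lemma quadratic_lt_of_lt_root (R : rcfType) (K D C x : R) :
  0 < K -> 0 <= D -> 0 <= C -> 0 <= x ->
  x < (Num.sqrt (D ^+ 2 + 4 * C * K) - D) / (2 * K) -> K * x ^+ 2 + D * x < C.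
Proof.
move=> K_gt0 D_ge0 C_ge0 x_ge0.
rewrite ltr_pdivlMr ?mulr_gt0 // ltrBrDr => lt_sqrt.
have disc_ge0 : 0 <= D ^+ 2 + 4 * C * K by rewrite addr_ge0 ?sqr_ge0 ?mulr_ge0 // ltW.
have lt_square : (x * (2 * K) + D) ^+ 2 < D ^+ 2 + 4 * C * K.
  by rewrite -(sqr_sqrtr disc_ge0) ltr_pXn2r // ?nnegrE ?sqrtr_ge0 // addr_ge0 ?mulr_ge0 // ltW.
rewrite -(ltr_pM2l (_ : 0 < 4 * K)) ?mulr_gt0 //; lra.
Qed.

Lemma max_abs_one_sub (R : realDomainType) (p q : R) :
  0 <= p -> p <= q -> q <= 1 -> Num.max `|1 - q| `|1 - p| = 1 - p.
Proof. by move=> p_ge0 p_le_q q_le1; rewrite !ger0_norm ?max_r; lra. Qed.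

Lemma positive_weights_exist (R : realFieldType) (e k u p r a t : R) :
  0 < e -> 0 <= k -> 0 < u -> 0 <= p -> 0 < r -> 0 < a ->
  a * (e * p + k * r) < u * t * r ->
  exists w0 w1, [/\ 0 < w0, 0 < w1, e * w1 + k < u * w0, p < r * w1 & a * w0 < t].
Proof.
move=> e_gt0 k_ge0 u_gt0 p_ge0 r_gt0 a_gt0 feasible.
(* w1 must exceed p / r and w0 stay below t / a; share the slack g of the
   middle inequality at these bounds between the two. *)
set g := u * (t / a) - (e * (p / r) + k).
have g_gt0 : 0 < g.
  rewrite subr_gt0 -(ltr_pM2r (mulr_gt0 a_gt0 r_gt0)).
  have -> : (e * (p / r) + k) * (a * r) = a * (e * p + k * r).
    by field; rewrite gt_eqF.
  have -> : u * (t / a) * (a * r) = u * t * r by field; rewrite gt_eqF.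
  exact: feasible.
exists (t / a - g / (4 * u)), (p / r + g / (4 * e)).
have w1_gt0 : 0 < p / r + g / (4 * e).
  by rewrite ltr_wpDl ?divr_ge0 ?divr_gt0 ?mulr_gt0 // ltW.
have col0 : e * (p / r + g / (4 * e)) + k < u * (t / a - g / (4 * u)).
  rewrite -subr_gt0 (_ : _ - _ = g / 2); first by rewrite divr_gt0.
  by rewrite /g; field; rewrite !gt_eqF.
split => //.
- rewrite -(pmulr_rgt0 _ u_gt0); apply: le_lt_trans col0.
  by rewrite addr_ge0 // mulr_ge0 // ltW.
- rewrite -subr_gt0 (_ : _ - _ = r * g / (4 * e)).
    by rewrite !mulr_gt0 ?invr_gt0 ?mulr_gt0.
  by field; rewrite !gt_eqF.
- rewrite -subr_gt0 (_ : _ - _ = a * g / (4 * u)).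
    by rewrite !mulr_gt0 ?invr_gt0 ?mulr_gt0.
  by field; rewrite !gt_eqF.
Qed.

Lemma cmodE (R : rcfType) (z : R[i]) : (cmod z)%:C%C = `|z|.
Proof. by rewrite normc_def. Qed.

Lemma cmod_ge0 (R : rcfType) (z : R[i]) : 0 <= cmod z.
Proof. exact: sqrtr_ge0. Qed.

Lemma cmod_gt0 (R : rcfType) (z : R[i]) : (0 < cmod z) = (z != 0).
Proof. by rewrite -ltcR cmodE normr_gt0. Qed.

Section CollatzWielandt.
Variables (R : realFieldType) (m : nat) (M : 'M[R]_m).
Hypothesis M_ge0 : forall i j, 0 <= M i j.

Lemma subeigen_le_supereigen (x w : 'I_m -> R) (mu q : R) (k0 : 'I_m) :
  (forall i, 0 <= x i) -> 0 < x k0 -> (forall i, 0 < w i) ->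
  (forall j, mu * x j <= \sum_i x i * M i j) ->
  (forall j, \sum_i w i * M i j <= q * w j) -> mu <= q.
Proof.
move=> x_ge0 xk0_gt0 w_gt0 sub super.
case: (@arg_maxP _ _ _ k0 xpredT (fun i => x i / w i) isT) => k _ k_max.
set r := x k / w k in k_max.
have x_le i : x i <= r * w i by rewrite -(ler_pdivrMr _ _ (w_gt0 i)); exact: k_max.
have r_gt0 : 0 < r by apply: lt_le_trans (k_max k0 isT); rewrite divr_gt0.
have xk_eq : x k = r * w k by rewrite divfK ?lt0r_neq0.
have xk_gt0 : 0 < x k by rewrite xk_eq mulr_gt0.
rewrite -(ler_pM2r xk_gt0); apply: le_trans (sub k) _.
apply: le_trans (_ : \sum_i r * (w i * M i k) <= _).
  by apply: ler_sum => i _; rewrite mulrA ler_wpM2r ?x_le.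
by rewrite -mulr_sumr xk_eq mulrCA ler_wpM2l ?super ?ltW.
Qed.

End CollatzWielandt.

Lemma cmod_left_eigen_le (R : rcfType) (m : nat) (M : 'M[R]_m) (u : 'rV[R[i]]_m)
    (lam : R[i]) :
  (forall i j, 0 <= M i j) -> u *m cplx_mx M = lam *: u ->
  forall j, cmod lam * cmod (u 0 j) <= \sum_i cmod (u 0 i) * M i j.
Proof.
move=> M_ge0 eigen_u j; rewrite -lecR rmorphM rmorph_sum /= !cmodE -normrM.
have := congr1 (fun v : 'rV_m => v 0 j) eigen_u; rewrite !mxE => <-.
apply: le_trans (ler_norm_sum _ _ _) _.
apply: ler_sum => i _; rewrite !mxE normrM rmorphM /= cmodE.
by rewrite (@ger0_norm _ (M i j)%:C%C) ?lecR.
Qed.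

Lemma spectral_radius_le (R : realType) (m : nat) (M : 'M[R]_m) (w : 'I_m -> R) (q : R) :
  (forall i j, 0 <= M i j) -> (forall i, 0 < w i) -> 0 <= q ->
  (forall j, \sum_i w i * M i j <= q * w j) -> spectral_radius M <= q.
Proof.
move=> M_ge0 w_gt0 q_ge0 super; rewrite /spectral_radius.
set S := [set _ | _ in _]%classic.
have [->|/set0P S_neq0] := eqVneq S set0; first by rewrite sup0.
apply: ge_sup => // _ [lam /eigenvalueP[u eigen_u u_neq0] <-].
have [k0 uk0_neq0] : exists k0, u 0 k0 != 0.
  apply/existsP; apply: contraR u_neq0 => /existsPn u0.
  by apply/eqP/rowP => k; rewrite mxE; apply/eqP; have := u0 k; rewrite negbK.
apply: (subeigen_le_supereigen (x := fun i => cmod (u 0 i)) (k0 := k0) M_ge0 _ _ w_gt0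
          (cmod_left_eigen_le M_ge0 eigen_u) super).
- by move=> i; exact: cmod_ge0.
- by rewrite cmod_gt0.
Qed.

Lemma spectral_radius_lt1 (R : realType) (m : nat) (M : 'M[R]_m) (w : 'I_m -> R) :
  (forall i j, 0 <= M i j) -> (forall i, 0 < w i) ->
  (forall j, \sum_i w i * M i j < w j) -> spectral_radius M < 1.
Proof.
move=> M_ge0 w_gt0 contracting.
pose q := \big[Num.max/0]_j ((\sum_i w i * M i j) / w j).
apply: (@le_lt_trans _ _ q).
  apply: (spectral_radius_le M_ge0 w_gt0); first exact: bigmax_ge_id.
  by move=> j; rewrite -(ler_pdivrMr _ _ (w_gt0 j)); exact: le_bigmax.
by apply: bigmax_lt => // j _; rewrite (ltr_pdivrMr _ _ (w_gt0 j)) mul1r.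
Qed.

Section G_alpha.
Variables (R : realType) (n : nat) (sigma c d eps l s y ym tau alpha : R).
Hypotheses (n_gt0 : (0 < n)%N) (sigma_gt0 : 0 < sigma) (sigma_lt1 : sigma < 1).
Hypotheses (c_gt0 : 0 < c) (d_gt0 : 0 < d) (eps_gt0 : 0 < eps) (l_gt0 : 0 < l).
Hypotheses (s_gt0 : 0 < s) (y_gt0 : 0 < y) (ym_gt0 : 0 < ym) (tau_ge0 : 0 <= tau).
Hypotheses (s_le_l : s <= l) (alpha_gt0 : 0 < alpha).

Let N : R := n%:R.
Let N_gt0 : 0 < N. Proof. by rewrite ltr0n. Qed.
Let G := G_alpha n sigma c d eps l s y ym tau alpha.
Let Delta := N * s * c * d * eps * l * ym * (1 - sigma + tau).
Let K := c * d * eps * l ^+ 2 * y * ym ^+ 2 * (l + N * s).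

Lemma G_alpha_ge0 i j : 0 <= G i j.
Proof.
rewrite mxE; case: i => [[|[|[|//]]] ?]; case: j => [[|[|[|//]]] ?] /=.
all: by rewrite ?le_max ?normr_ge0 // ?(mulr_ge0, addr_ge0, exprn_ge0) // ltW.
Qed.

Lemma G_alpha_colsum_lt (w0 w1 : R) :
  N * alpha * l <= 1 ->
  alpha * c * l * ym * w1 + c * d * eps * l * ym * (tau + alpha * l * y * ym)
    < (1 - sigma) * w0 ->
  alpha * d * eps * l ^+ 2 * y * ym < N * alpha * s * w1 ->
  alpha * w0 < 1 - sigma - alpha * (c * d * eps * l * ym) ->
  forall j : 'I_3, \sum_(i < 3) nth 0 [:: w0; w1; 1] i * G i j < nth 0 [:: w0; w1; 1] j.
Proof.
move=> small col0 col1 col2.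
have eta_eq : Num.max `|1 - N * alpha * l| `|1 - N * alpha * s| = 1 - N * alpha * s.
  apply: max_abs_one_sub => //; first by rewrite !mulr_ge0 // ltW.
  by rewrite ler_pM2l // mulr_gt0.
case=> [[|[|[|//]]] j_lt3]; rewrite !big_ord_recl big_ord0 !mxE /= ?eta_eq; lra.
Qed.

(* The gap between the two sides is alpha times the slack in the quadratic
   inequality whose positive root is the first term of alpha_bar. *)
Lemma G_alpha_weights_feasible :
  alpha < (Num.sqrt (Delta ^+ 2 + 4 * N * s * (1 - sigma) ^+ 2 * K) - Delta) / (2 * K) ->
  alpha * ((alpha * c * l * ym) * (alpha * d * eps * l ^+ 2 * y * ym)
           + c * d * eps * l * ym * (tau + alpha * l * y * ym) * (N * alpha * s))
  < (1 - sigma) * (1 - sigma - alpha * (c * d * eps * l * ym)) * (N * alpha * s).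
Proof.
rewrite (_ : 4 * N * s * _ ^+ 2 = 4 * (N * s * (1 - sigma) ^+ 2)); last by ring.
move=> lt_root.
have K_gt0 : 0 < K by rewrite !(mulr_gt0, exprn_gt0, addr_gt0).
have Delta_ge0 : 0 <= Delta by rewrite !mulr_ge0 ?ler0n ?ltW // ltr_wpDr // subr_gt0.
have C_ge0 : 0 <= N * s * (1 - sigma) ^+ 2 by rewrite mulr_ge0 ?sqr_ge0 // ltW // mulr_gt0.
have := quadratic_lt_of_lt_root K_gt0 Delta_ge0 C_ge0 (ltW alpha_gt0) lt_root.
rewrite -subr_gt0 => quadratic_gap.
rewrite -subr_gt0 (_ : _ - _ = alpha * (N * s * (1 - sigma) ^+ 2 - (K * alpha ^+ 2 + Delta * alpha))).
  by rewrite mulr_gt0.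
by rewrite /K /Delta; ring.
Qed.

Lemma G_alpha_contracting_weights :
  alpha < alpha_bar n sigma c d eps l s y ym tau ->
  exists2 w : 'I_3 -> R, (forall i, 0 < w i) & (forall j, \sum_i w i * G i j < w j).
Proof.
rewrite /alpha_bar lt_min => /andP[/G_alpha_weights_feasible + lt_inv].
have small : N * alpha * l <= 1.
  by move: lt_inv; rewrite ltr_pdivlMr ?mulr_gt0 // mulrCA mulrA => /ltW.
case/positive_weights_exist;
  rewrite ?subr_gt0 ?(mulr_gt0, mulr_ge0, addr_ge0, exprn_ge0) // ?ltW //.
move=> w0 [w1 [w0_gt0 w1_gt0 col0 col1 col2]].
exists (fun i => nth 0 [:: w0; w1; 1] i); first by case=> [[|[|[|//]]] ?].
exact: G_alpha_colsum_lt.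
Qed.

End G_alpha.

Theorem lemma4 (R : realType) (n : nat) (sigma c d eps l s y ym tau : R) :
  (1 <= n)%N ->
  0 < sigma -> sigma < 1 ->
  0 < c -> 0 < d -> 0 < eps -> 0 < l -> 0 < s -> 0 < y -> 0 < ym ->
  0 <= tau -> s <= l ->
  forall alpha : R, 0 < alpha -> alpha < alpha_bar n sigma c d eps l s y ym tau ->
  spectral_radius (G_alpha n sigma c d eps l s y ym tau alpha) < 1.
Proof.
move=> n_gt0 sigma_gt0 sigma_lt1 c_gt0 d_gt0 eps_gt0 l_gt0 s_gt0 y_gt0 ym_gt0
  tau_ge0 s_le_l alpha alpha_gt0 alpha_lt_bar.
have [w w_gt0 contracting] := G_alpha_contracting_weights n_gt0 sigma_lt1
  c_gt0 d_gt0 eps_gt0 l_gt0 s_gt0 y_gt0 ym_gt0 tau_ge0 s_le_l alpha_gt0 alpha_lt_bar.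
by apply: spectral_radius_lt1 contracting => //; apply: G_alpha_ge0.
Qed.
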